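(* (i) For every $n\ge 0$ and $i\in\{0,1\}$, $v_n(x,i)$ is concave in $x$, i.e. $\Delta_n(x,i)\le\Delta_n(x+1,i)$ for all $x\ge0$. (ii) For every $n\ge0$, with $B^s_n=1+T_{\Delta_n(\cdot,0)}(c/\delta)$ and $B^d_{n+1}=T_{\Delta_{n+1}(\cdot,0)}(R)$, the optimal decisions satisfy $a^s_{n+1}(0)=l$; for $x>0$, $a^s_{n+1}(x)=l$ if $x\le B^s_n$ and $a^s_{n+1}(x)=h$ if $x>B^s_n$; and for $x\ge 0$, $a^d_{n+1}(x)=1$ if $x\le B^d_{n+1}$ and $a^d_{n+1}(x)=0$ if $x>B^d_{n+1}$.
   Context: Parameters: $\lambda>0$, $0<\mu_l<\mu_h$, $\delta=\mu_h-\mu_l$, $R\ge 0$, $c>0$, and $h:\{0,1,2,\dots\}\to\mathbb{R}$ nondecreasing and convex with $h(0)=0$; the rates are normalized so that $\lambda+\mu_h+\beta=1$ for a discount rate $\beta>0$. Finite-horizon value functions on $S=\{0,1,2,\dots\}\times\{0,1\}$: $v_0\equiv 0$ and for $n\ge 0$: $v_{n+1}(0,0)=\lambda v_n(0,1)+\mu_h v_n(0,0)$; $v_{n+1}(x,0)=-h(x)+\lambda v_n(x,1)+\mu_l v_n(x-1,0)+\max\{\delta v_n(x,0),-c+\delta v_n(x-1,0)\}$ for $x\ge1$; $v_{n+1}(x,1)=\max\{R+v_{n+1}(x+1,0),v_{n+1}(x,0)\}$ for $x\ge 0$. Define $\Delta_n(x,i)=v_n(x,i)-v_n(x+1,i)$.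 Optimal decisions with $n+1$ steps remaining: admission decision in state $(x,1)$, $x\ge0$: $a^d_{n+1}(x)=1$ (admit) if $\Delta_{n+1}(x,0)\le R$ and $0$ (reject) otherwise; service-rate decision in state $(x,0)$: $a^s_{n+1}(0)=l$, and for $x>0$, $a^s_{n+1}(x)=l$ (low rate $\mu_l$) if $\Delta_n(x-1,0)\le c/\delta$ and $h$ (high rate $\mu_h$) otherwise. Threshold function: for $f:\{0,1,2,\dots\}\to\mathbb{R}$ and $\theta\in\mathbb{R}$, $T_f(\theta)=\sup\{k\ge0: f(k)\le\theta\}$, with $\sup\emptyset=-1$ (the value $+\infty$ is allowed). *)

From Stdlib Require Import Reals Lra Lia ClassicalEpsilon.
Open Scope R_scope.

(* States (x, i) with x : nat and i : bool, where i = false means 0 and i = true means 1. *)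

(* v n (x,i) : finite-horizon value function with n steps remaining.
   Parameters: lam = lambda, mul = mu_l, muh = mu_h, Rw = R (reward), c, h. *)
Fixpoint v (lam mul muh Rw c : R) (h : nat -> R) (n : nat) : nat * bool -> R :=
  match n with
  | O => fun _ => 0
  | S m =>
    let w := v lam mul muh Rw c h m in
    let delta := muh - mul in
    let v0 (x : nat) : R :=
      match x with
      | O => lam * w (O, true) + muh * w (O, false)
      | S y => - h x + lam * w (x, true) + mul * w (y, false)
               + Rmax (delta * w (x, false)) (- c + delta * w (y, false))
      end in
    fun s => let (x, i) := s in
      if i then Rmax (Rw + v0 (S x)) (v0 x) else v0 x
  end.

Definition Dlt (lam mul muh Rw c : R) (h : nat -> R) (n x : nat) (i : bool) : R :=
  v lam mul muh Rw c h n (x, i) - v lam mul muh Rw c h n (S x, i).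

Inductive rate := Low | High.

(* a_s lam mul muh Rw c h n x  =  a^s_{n+1}(x)  (service rate with n+1 steps remaining) *)
Definition a_s (lam mul muh Rw c : R) (h : nat -> R) (n x : nat) : rate :=
  match x with
  | O => Low
  | S y => if Rle_dec (Dlt lam mul muh Rw c h n y false) (c / (muh - mul)) then Low else High
  end.

(* a_d lam mul muh Rw c h m x  =  a^d_m(x)  (true = admit, false = reject);
   used with m = n+1. *)
Definition a_d (lam mul muh Rw c : R) (h : nat -> R) (m x : nat) : bool :=
  if Rle_dec (Dlt lam mul muh Rw c h m x false) Rw then true else false.

Inductive extn := ENeg1 | EFin (k : nat) | EInf.

(* t is the supremum of {k >= 0 : f k <= th}, with sup of the empty set = -1. *)
Definition is_thr (f : nat -> R) (th : R) (t : extn) : Prop :=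
  match t with
  | ENeg1 => forall k, th < f k
  | EFin m => f m <= th /\ (forall k, f k <= th -> (k <= m)%nat)
  | EInf => forall m, exists k, (m <= k)%nat /\ f k <= th
  end.

Definition T (f : nat -> R) (th : R) : extn :=
  epsilon (inhabits ENeg1) (is_thr f th).

Definition ext_succ (t : extn) : extn :=
  match t with ENeg1 => EFin 0 | EFin m => EFin (S m) | EInf => EInf end.

Definition ext_le (x : nat) (t : extn) : Prop :=
  match t with ENeg1 => False | EFin m => (x <= m)%nat | EInf => True end.

Definition ext_gt (x : nat) (t : extn) : Prop :=
  match t with ENeg1 => True | EFin m => (m < x)%nat | EInf => False end.

Definition Bs (lam mul muh Rw c : R) (h : nat -> R) (n : nat) : extn :=
  ext_succ (T (fun x => Dlt lam mul muh Rw c h n x false) (c / (muh - mul))).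

Definition Bd (lam mul muh Rw c : R) (h : nat -> R) (m : nat) : extn :=
  T (fun x => Dlt lam mul muh Rw c h m x false) Rw.

From Stdlib Require Import Reals.
From Stdlib Require Import Lra Lia ClassicalEpsilon Classical.
Open Scope R_scope.

(* Part (i) is proved by induction on the horizon n, carrying the stronger
   invariant that every gap Delta_n(x,i) is nonnegative and nondecreasing in x
   (monotonicity of v_n together with concavity).  Two rewritings of the
   Bellman recursion drive the step:
   - Delta_{n+1}(x,0) is h(x+1)-h(x) plus nonnegative combinations of the
     gaps of v_n, plus a term min(delta*Delta_n(x,0), c) + max(0, delta*A - c)
     that is monotone in both gaps (A is the gap just below x);
   - v_{n+1}(x,1) = v_{n+1}(x+1,0) + max(R, Delta_{n+1}(x,0)), so Delta_{n+1}(.,1)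
     is controlled by Delta_{n+1}(.,0).
   Part (ii) is then a general fact about the threshold T_f(theta) of a
   nondecreasing sequence f: f x <= theta exactly for x <= T_f(theta).  Both
   optimal decisions compare a gap of v_n(.,0) with a constant, and these
   gaps are nondecreasing by part (i). *)

Lemma thr_exists (f : nat -> R) (th : R) : exists t, is_thr f th t.
Proof.
  destruct (classic (forall m, exists k, (m <= k)%nat /\ f k <= th)) as [Hunb|Hbd].
  - exists EInf. exact Hunb.
  - apply not_all_ex_not in Hbd as [m Hm].
    assert (Habove : forall k, (m <= k)%nat -> th < f k).
    { intros k Hk. destruct (Rle_dec (f k) th) as [Hle|]; [|lra].
      exfalso; apply Hm; exists k; auto. }
    clear Hm. induction m as [|m IHm].
    + exists ENeg1. intros k; apply Habove; lia.
    + destruct (Rle_dec (f m) th) as [Hle|Hgt].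
      * exists (EFin m). split; [exact Hle|]. intros k Hk.
        destruct (Compare_dec.le_lt_dec k m) as [|Hlt]; [assumption|].
        specialize (Habove k Hlt); lra.
      * apply IHm. intros k Hk.
        destruct (Nat.eq_dec k m) as [->|]; [lra|]. apply Habove; lia.
Qed.

Lemma T_is_thr (f : nat -> R) (th : R) : is_thr f th (T f th).
Proof. unfold T. apply epsilon_spec, thr_exists. Qed.

Lemma threshold_separates (f : nat -> R) (th : R)
  (Hmono : forall x, f x <= f (S x)) (x : nat) :
  (ext_le x (T f th) -> f x <= th) /\ (ext_gt x (T f th) -> th < f x).
Proof.
  assert (Hle : forall a b, (a <= b)%nat -> f a <= f b).
  { intros a b Hab. induction Hab as [|b _ IH]; [lra|]. specialize (Hmono b); lra. }
  pose proof (T_is_thr f th) as Hthr.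
  destruct (T f th) as [|m|]; simpl in *; split; intros Hx.
  - contradiction.
  - apply Hthr.
  - destruct Hthr as [Hm _]. specialize (Hle _ _ Hx); lra.
  - destruct Hthr as [_ Hmax]. destruct (Rle_dec (f x) th) as [Hfx|]; [|lra].
    specialize (Hmax x Hfx); lia.
  - destruct (Hthr x) as [k [Hk Hfk]]. specialize (Hle _ _ Hk); lra.
  - contradiction.
Qed.

Lemma ext_le_succ (y : nat) (t : extn) : ext_le (S y) (ext_succ t) -> ext_le y t.
Proof. destruct t; simpl; lia. Qed.

Lemma ext_gt_succ (y : nat) (t : extn) : ext_gt (S y) (ext_succ t) -> ext_gt y t.
Proof. destruct t; simpl; lia. Qed.

(* Elementary facts about the nonlinear terms of the recursion.  With
   u, w the scaled gaps, w + max(0,u-c) - max(0,w-c) = min(w,c) + max(0,u-c),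
   which is nonnegative and monotone in (u, w). *)
Lemma service_term_nonneg (u w c : R) : 0 <= u -> 0 <= w -> 0 < c ->
  0 <= w + Rmax 0 (u - c) - Rmax 0 (w - c).
Proof. intros; unfold Rmax; repeat destruct Rle_dec; lra. Qed.

Lemma service_term_mono (u1 u2 w1 w2 c : R) : u1 <= u2 -> w1 <= w2 ->
  w1 + Rmax 0 (u1 - c) - Rmax 0 (w1 - c) <= w2 + Rmax 0 (u2 - c) - Rmax 0 (w2 - c).
Proof. intros; unfold Rmax; repeat destruct Rle_dec; lra. Qed.

Lemma admission_term_nonneg (Rw e0 e1 : R) : 0 <= Rw -> 0 <= e1 ->
  0 <= e1 + Rmax Rw e0 - Rmax Rw e1.
Proof. intros; unfold Rmax; repeat destruct Rle_dec; lra. Qed.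

Lemma admission_term_mono (Rw e0 e1 e2 : R) : e0 <= e1 -> e1 <= e2 ->
  e1 + Rmax Rw e0 - Rmax Rw e1 <= e2 + Rmax Rw e1 - Rmax Rw e2.
Proof. intros; unfold Rmax; repeat destruct Rle_dec; lra. Qed.

Section ValueFunction.

Variables (lam mul muh Rw c : R) (h : nat -> R).

Local Notation V := (v lam mul muh Rw c h).
Local Notation D := (Dlt lam mul muh Rw c h).
Local Notation delta := (muh - mul).

(* The gap of v_n(.,0) just below x: v_n(x-1,0) - v_n(x,0), and 0 at x = 0.
   It is the gain of serving at the high rate in state (x,0). *)
Definition gap_below (n x : nat) : R :=
  match x with O => 0 | S y => D n y false end.

Lemma gap_below_spec (n x : nat) :
  V n (pred x, false) - V n (x, false) = gap_below n x.
Proof. destruct x; simpl; unfold Dlt; ring. Qed.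

Hypothesis Hc : 0 < c.
Hypothesis Hh0 : h O = 0.

(* Uniform form of the recursion in state (x,0), including x = 0: the
   choice of service rate contributes max(0, delta * gap_below - c). *)
Lemma v_empty_recursion (n x : nat) :
  V (S n) (x, false) =
  - h x + lam * V n (x, true) + mul * V n (pred x, false)
  + delta * V n (x, false) + Rmax 0 (delta * gap_below n x - c).
Proof.
  destruct x as [|y]; simpl gap_below; simpl pred.
  - change (V (S n) (0%nat, false)) with
      (lam * V n (0%nat, true) + muh * V n (0%nat, false)).
    rewrite Hh0, Rmult_0_r, Rmax_left by lra. ring.
  - change (V (S n) (S y, false)) with
      (- h (S y) + lam * V n (S y, true) + mul * V n (y, false)
       + Rmax (delta * V n (S y, false)) (- c + delta * V n (y, false))).
    unfold Dlt, Rmax; destruct Rle_dec, Rle_dec; lra.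
Qed.

Lemma gap_empty_recursion (n x : nat) :
  D (S n) x false =
  (h (S x) - h x) + lam * D n x true + mul * gap_below n x
  + (delta * D n x false + Rmax 0 (delta * gap_below n x - c)
     - Rmax 0 (delta * D n x false - c)).
Proof.
  unfold Dlt at 1. rewrite !v_empty_recursion, <- (gap_below_spec n x).
  change (gap_below n (S x)) with (D n x false).
  simpl pred. unfold Dlt. ring.
Qed.

Lemma v_full_formula (n x : nat) :
  V (S n) (x, true) = V (S n) (S x, false) + Rmax Rw (D (S n) x false).
Proof.
  change (V (S n) (x, true)) with
    (Rmax (Rw + V (S n) (S x, false)) (V (S n) (x, false))).
  unfold Dlt, Rmax; repeat destruct Rle_dec; lra.
Qed.

Lemma gap_full_formula (n x : nat) :
  D (S n) x true =
  D (S n) (S x) false + Rmax Rw (D (S n) x false) - Rmax Rw (D (S n) (S x) false).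
Proof. unfold Dlt at 1. rewrite !v_full_formula. unfold Dlt. ring. Qed.

Hypotheses (Hlam : 0 < lam) (Hmul : 0 < mul) (Hmu : mul < muh) (HR : 0 <= Rw).
Hypothesis Hhmon : forall x, h x <= h (S x).
Hypothesis Hhconv : forall x, h (S x) - h x <= h (S (S x)) - h (S x).

(* The induction invariant: gaps are nonnegative (v_n(.,i) is nonincreasing)
   and nondecreasing (v_n(.,i) is concave). *)
Definition regular_gaps (n : nat) (i : bool) : Prop :=
  forall x, 0 <= D n x i /\ D n x i <= D n (S x) i.

Lemma gap_below_bounds (n : nat) : regular_gaps n false ->
  forall x, 0 <= gap_below n x /\ gap_below n x <= D n x false.
Proof.
  intros Hreg [|y]; simpl.
  - split; [lra|]. apply Hreg.
  - apply Hreg.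
Qed.

Lemma regular_gaps_empty_step (n : nat) :
  regular_gaps n false -> regular_gaps n true -> regular_gaps (S n) false.
Proof.
  intros Hreg0 Hreg1 x.
  destruct (Hreg0 x) as [HD0 HDmono], (Hreg1 x) as [HD1 HD1mono].
  destruct (gap_below_bounds n Hreg0 x) as [HA0 HAD].
  assert (Hd : 0 < delta) by lra.
  rewrite !gap_empty_recursion. change (gap_below n (S x)) with (D n x false).
  split.
  - pose proof (service_term_nonneg (delta * gap_below n x) (delta * D n x false) c
                  ltac:(nra) ltac:(nra) Hc).
    specialize (Hhmon x). nra.
  - pose proof (service_term_mono (delta * gap_below n x) (delta * D n x false)
                  (delta * D n x false) (delta * D n (S x) false) c
                  ltac:(nra) ltac:(nra)).
    specialize (Hhconv x). nra.
Qed.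

Lemma regular_gaps_full_step (n : nat) :
  regular_gaps (S n) false -> regular_gaps (S n) true.
Proof.
  intros Hreg x. rewrite !gap_full_formula. split.
  - exact (admission_term_nonneg Rw _ _ HR (proj1 (Hreg (S x)))).
  - exact (admission_term_mono Rw _ _ _ (proj2 (Hreg x)) (proj2 (Hreg (S x)))).
Qed.

Lemma regular_gaps_all (n : nat) : forall i, regular_gaps n i.
Proof.
  induction n as [|n IH].
  - intros i x. unfold Dlt; simpl; lra.
  - assert (H0 : regular_gaps (S n) false)
      by exact (regular_gaps_empty_step n (IH false) (IH true)).
    intros [|]; [exact (regular_gaps_full_step n H0) | exact H0].
Qed.

End ValueFunction.

Lemma service_rate_threshold (lam mul muh Rw c : R) (h : nat -> R) (n : nat)
  (Hmono : forall x, Dlt lam mul muh Rw c h n x false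
                     <= Dlt lam mul muh Rw c h n (S x) false) (x : nat) :
  (0 < x)%nat ->
  (ext_le x (Bs lam mul muh Rw c h n) -> a_s lam mul muh Rw c h n x = Low)
  /\ (ext_gt x (Bs lam mul muh Rw c h n) -> a_s lam mul muh Rw c h n x = High).
Proof.
  intros Hx. destruct x as [|y]; [lia|].
  destruct (threshold_separates _ (c / (muh - mul)) Hmono y) as [Hlow Hhigh].
  unfold Bs, a_s. split; intros Hy; destruct Rle_dec as [Hle|Hgt]; try reflexivity.
  - specialize (Hlow (ext_le_succ _ _ Hy)); lra.
  - specialize (Hhigh (ext_gt_succ _ _ Hy)); lra.
Qed.

Lemma admission_threshold (lam mul muh Rw c : R) (h : nat -> R) (m : nat)
  (Hmono : forall x, Dlt lam mul muh Rw c h m x false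
                     <= Dlt lam mul muh Rw c h m (S x) false) (x : nat) :
  (ext_le x (Bd lam mul muh Rw c h m) -> a_d lam mul muh Rw c h m x = true)
  /\ (ext_gt x (Bd lam mul muh Rw c h m) -> a_d lam mul muh Rw c h m x = false).
Proof.
  destruct (threshold_separates _ Rw Hmono x) as [Hadmit Hreject].
  unfold Bd, a_d. split; intros Hx; destruct Rle_dec as [Hle|Hgt]; try reflexivity.
  - specialize (Hadmit Hx); lra.
  - specialize (Hreject Hx); lra.
Qed.

Theorem theorem2 (lam mul muh beta Rw c : R) (h : nat -> R)
  (Hlam : 0 < lam) (Hmul : 0 < mul) (Hmu : mul < muh)
  (HR : 0 <= Rw) (Hc : 0 < c) (Hbeta : 0 < beta)
  (Hnorm : lam + muh + beta = 1)
  (Hh0 : h O = 0)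
  (Hhmon : forall x, h x <= h (S x))
  (Hhconv : forall x, h (S x) - h x <= h (S (S x)) - h (S x)) :
  (forall (n : nat) (i : bool) (x : nat),
      Dlt lam mul muh Rw c h n x i <= Dlt lam mul muh Rw c h n (S x) i)
  /\
  (forall n : nat,
      a_s lam mul muh Rw c h n O = Low
      /\ (forall x : nat, (0 < x)%nat ->
            (ext_le x (Bs lam mul muh Rw c h n) -> a_s lam mul muh Rw c h n x = Low)
            /\ (ext_gt x (Bs lam mul muh Rw c h n) -> a_s lam mul muh Rw c h n x = High))
      /\ (forall x : nat,
            (ext_le x (Bd lam mul muh Rw c h (S n)) -> a_d lam mul muh Rw c h (S n) x = true)
            /\ (ext_gt x (Bd lam mul muh Rw c h (S n)) -> a_d lam mul muh Rw c h (S n) x = false))).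
Proof.
  pose proof (regular_gaps_all lam mul muh Rw c h Hc Hh0 Hlam Hmul Hmu HR Hhmon Hhconv)
    as Hreg.
  assert (Hconcave : forall n i x,
             Dlt lam mul muh Rw c h n x i <= Dlt lam mul muh Rw c h n (S x) i)
    by (intros n i x; apply (Hreg n i x)).
  split; [exact Hconcave|].
  intros n. split; [reflexivity|]. split.
  - intros x Hx. exact (service_rate_threshold _ _ _ _ _ _ n (Hconcave n false) x Hx).
  - intros x. exact (admission_threshold _ _ _ _ _ _ (S n) (Hconcave (S n) false) x).
Qed.
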